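(* Let $a_0,a_1,a_2,b_0,b_1$ be complex numbers with $a_1\neq 0$ and $a_2\neq 0$. Let $(T(n,k))_{n\ge 0,\,k\in\mathbb{Z}}$ be defined by $T(0,0)=1$, $T(0,k)=0$ for $k\neq 0$, $T(n,k)=0$ for $k<0$, and for $n\ge 1$ and all $k$, \[ T(n,k)=(a_2 n+a_1 k+a_0)\,T(n-1,k)+(b_1 k+b_0)\,T(n-1,k-1). \] Then for all integers $n,k\ge 0$, \[ T(n,k)=\frac{(b_0+b_1\,|\,b_1)^{(\overline{k})}}{a_1^k\,k!}\sum_{j=0}^{k}(-1)^{k-j}\binom{k}{j}\prod_{r=1}^{n}\bigl(a_0+a_1 j+r a_2\bigr). \]
   Context: For a number $x$, a step $a$ and an integer $k\ge 0$, $(x\,|\,a)^{(\overline{k})}=x(x+a)(x+2a)\cdots(x+(k-1)a)$, with $(x\,|\,a)^{(\overline{0})}=1$. Empty products equal $1$. *)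

From mathcomp Require Import all_boot all_order all_algebra.
From mathcomp Require Import complex.
From mathcomp Require Import reals.
Set Implicit Arguments. Unset Strict Implicit. Unset Printing Implicit Defensive.
Import Order.TTheory GRing.Theory Num.Theory.
Local Open Scope ring_scope.
Local Open Scope complex_scope.

Definition rising_step (F : pzRingType) (x a : F) (k : nat) : F :=
  \prod_(i < k) (x + i%:R * a).

Fixpoint Ttri (R : rcfType) (a0 a1 a2 b0 b1 : R[i]) (n : nat) (k : int)
  {struct n} : R[i] :=
  match n with
  | 0%N => if k == 0 then 1 else 0
  | m.+1 => if (k < 0)%R then 0 else
      (a2 * (m.+1)%:R + a1 * k%:~R + a0) * Ttri a0 a1 a2 b0 b1 m k
      + (b1 * k%:~R + b0) * Ttri a0 a1 a2 b0 b1 m (k - 1)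
  end.

(* The alternating binomial sum is the k-th forward difference at 0 of
   j |-> prod_(r=1..n) (a0 + a1 j + r a2).  Multiplying a function by j
   multiplies its k-th difference by k and adds k times its (k-1)-th one, so
   these differences satisfy the recurrence of T with b1 k + b0 replaced by
   a1 k.  Rescaling the k-th column by (b0 + b1 | b1)^(k) / (a1^k k!) turns
   a1 k into b1 k + b0, and both sides agree for n = 0. *)
From mathcomp Require Import all_boot all_order all_algebra.
From mathcomp Require Import complex reals.
From mathcomp Require Import ring.
Set Implicit Arguments. Unset Strict Implicit. Unset Printing Implicit Defensive.
Import Order.TTheory GRing.Theory Num.Theory.
Local Open Scope ring_scope.
Local Open Scope complex_scope.

Section ForwardDifference.
Variable R : comPzRingType.

Definition forward_diff (f : nat -> R) (k : nat) : R :=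
  \sum_(j < k.+1) (-1) ^+ (k - j) * 'C(k, j)%:R * f j.

Lemma forward_diff_widen f k :
  forward_diff f k = \sum_(j < k.+2) (-1) ^+ (k - j) * 'C(k, j)%:R * f j.
Proof. by rewrite big_ord_recr /= bin_small // mulr0 mul0r addr0. Qed.

Lemma eq_forward_diff f g k : f =1 g -> forward_diff f k = forward_diff g k.
Proof. by move=> fg; apply: eq_bigr => j _; rewrite fg. Qed.

Lemma forward_diffD f g k :
  forward_diff (fun j => f j + g j) k = forward_diff f k + forward_diff g k.
Proof. by rewrite -big_split; apply: eq_bigr => j _; rewrite mulrDr. Qed.

Lemma forward_diffZ c f k :
  forward_diff (fun j => c * f j) k = c * forward_diff f k.
Proof. by rewrite mulr_sumr; apply: eq_bigr => j _; rewrite mulrCA. Qed.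

Lemma forward_diff1 k : forward_diff (fun=> 1) k = (k == 0)%:R.
Proof.
have -> : forward_diff (fun=> 1) k =
          \sum_(j < k.+1) ((-1) ^+ (k - j) * 1 ^+ j) *+ 'C(k, j).
  by apply: eq_bigr => j _; rewrite expr1n !mulr1 mulr_natr.
by rewrite -exprDn addNr expr0n.
Qed.

Lemma signed_bin_natrM k j : (j <= k.+1)%N ->
  (-1) ^+ (k.+1 - j) * 'C(k.+1, j)%:R * j%:R =
  k.+1%:R * ((-1) ^+ (k.+1 - j) * 'C(k.+1, j)%:R
             + (-1) ^+ (k - j) * 'C(k, j)%:R) :> R.
Proof.
rewrite leq_eqVlt => /orP[/eqP-> | ltjk].
  by rewrite subnn binn bin_small // mulr0 addr0 mulr1 mulrC.
have binS : k.+1%:R * 'C(k, j)%:R = (k.+1 - j)%:R * 'C(k.+1, j)%:R :> R.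
  by rewrite -!natrM (mul_bin_down k.+1 j).
rewrite subSn // exprS mulrDr [k.+1%:R * (_ * 'C(k, j)%:R)]mulrCA binS.
by rewrite natrB ?(ltnW ltjk) //; ring.
Qed.

Lemma forward_diff_natrM f k :
  forward_diff (fun j => j%:R * f j) k =
  k%:R * (forward_diff f k + forward_diff f k.-1).
Proof.
case: k => [|k]; first by rewrite /forward_diff big_ord1 !mul0r mulr0.
rewrite /= [forward_diff f k]forward_diff_widen -big_split mulr_sumr.
apply: eq_bigr => j _.
by rewrite mulrA (@signed_bin_natrM k j (ltn_ord j)) -mulrA mulrDl.
Qed.

End ForwardDifference.

Section AlternatingSum.
Variable R : comPzRingType.
Variables a0 a1 a2 : R.

Definition lin_prod (n j : nat) : R :=
  \prod_(1 <= r < n.+1) (a0 + a1 * j%:R + r%:R * a2).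

Definition alt_sum (n k : nat) : R := forward_diff (lin_prod n) k.

Lemma lin_prodS n j :
  lin_prod n.+1 j =
  (a0 + n.+1%:R * a2) * lin_prod n j + a1 * (j%:R * lin_prod n j).
Proof. by rewrite /lin_prod big_nat_recr //= mulrC; ring. Qed.

Lemma alt_sum0 k : alt_sum 0 k = (k == 0)%:R.
Proof.
by rewrite -forward_diff1; apply: eq_bigr => j _; rewrite /lin_prod big_geq.
Qed.

Lemma alt_sumS n k :
  alt_sum n.+1 k = (a2 * n.+1%:R + a1 * k%:R + a0) * alt_sum n k
                   + a1 * k%:R * alt_sum n k.-1.
Proof.
rewrite /alt_sum (eq_forward_diff _ (lin_prodS n)).
rewrite forward_diffD !forward_diffZ forward_diff_natrM; ring.
Qed.

End AlternatingSum.

Definition column_scale (F : fieldType) (b0 b1 a1 : F) (k : nat) : F :=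
  rising_step (b0 + b1) b1 k / (a1 ^+ k * k`!%:R).

Lemma column_scale0 (F : fieldType) (b0 b1 a1 : F) :
  column_scale b0 b1 a1 0 = 1.
Proof. by rewrite /column_scale /rising_step big_ord0 fact0 mulr1 invr1 mulr1. Qed.

Lemma column_scaleS (F : numFieldType) (b0 b1 a1 : F) k : a1 != 0 ->
  column_scale b0 b1 a1 k.+1 * (a1 * k.+1%:R) =
  (b1 * k.+1%:R + b0) * column_scale b0 b1 a1 k.
Proof.
move=> a1_neq0.
have fact_neq0 : k`!%:R != 0 :> F by rewrite pnatr_eq0 -lt0n fact_gt0.
have kS_neq0 : k.+1%:R != 0 :> F by rewrite pnatr_eq0.
rewrite /column_scale /rising_step big_ord_recr /= factS natrM exprS -natr1.
by field; rewrite natr1 kS_neq0 fact_neq0 expf_neq0.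
Qed.

Lemma TtriS_nat (R : rcfType) (a0 a1 a2 b0 b1 : R[i]) n k :
  Ttri a0 a1 a2 b0 b1 n.+1 k%:Z =
  (a2 * n.+1%:R + a1 * k%:R + a0) * Ttri a0 a1 a2 b0 b1 n k%:Z
  + (b1 * k%:R + b0) * Ttri a0 a1 a2 b0 b1 n (k%:Z - 1).
Proof. by rewrite /= -pmulrn. Qed.

Lemma Ttri_alt_sum (R : rcfType) (a0 a1 a2 b0 b1 : R[i]) n k : a1 != 0 ->
  Ttri a0 a1 a2 b0 b1 n k%:Z = column_scale b0 b1 a1 k * alt_sum a0 a1 a2 n k.
Proof.
move=> a1_neq0; elim: n k => [|n IHn] k.
  by rewrite alt_sum0; case: k => [|k]; rewrite /= ?column_scale0 ?mulr1 ?mulr0.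
rewrite TtriS_nat alt_sumS IHn mulrDr mulrCA; congr (_ + _).
case: k => [|k].
  have -> : Ttri a0 a1 a2 b0 b1 n (0 - 1) = 0 by case: n {IHn}.
  by rewrite !mulr0 mul0r mulr0.
have -> : k.+1%:Z - 1 = k%:Z by rewrite -addn1 PoszD addrK.
by rewrite IHn mulrA -column_scaleS // [RHS]mulrA.
Qed.

Theorem mainTheorem2 (R : realType) (a0 a1 a2 b0 b1 : R[i])
  (ha1 : a1 != 0) (ha2 : a2 != 0) (n k : nat) :
  Ttri a0 a1 a2 b0 b1 n k%:Z =
  rising_step (b0 + b1) b1 k / (a1 ^+ k * (k`!)%:R) *
  \sum_(j < k.+1) ((-1) ^+ (k - j) * ('C(k, j))%:R *
     \prod_(1 <= r < n.+1) (a0 + a1 * (j : nat)%:R + r%:R * a2)).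
Proof. by rewrite Ttri_alt_sum. Qed.
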